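(* Let $G$ be an $(N,k)$ Adinkra with vertex set $V$, with the matrices $\gamma_1,\dots,\gamma_N$ defined as in the context, and let $M=\gamma_{i_1}\gamma_{i_2}\cdots\gamma_{i_t}$ for some $i_1,\dots,i_t\in\{1,\dots,N\}$. Then $M_{x,x}\neq0$ for some $x\in V$ if and only if $M_{x,x}\neq 0$ for all $x\in V$.
   Context: An Adinkra of dimension $N$ is a finite connected simple graph $G=(V,E)$ with: a bipartition of $V$ into bosons and fermions (every edge joins a boson and a fermion); a height function (irrelevant here); a coloring of $E$ by colors $\{1,\dots,N\}$ such that each vertex is incident to exactly one edge of each color; an edge parity $\pi:E\to\mathbb{Z}_2$ (parity $1$ = dashed); such that every path with edge colors $(i,j)$, $i\ne j$, lies in a unique 4-cycle with colors $(i,j,i,j)$, each having an odd number of dashed edges. If $|V|=2^{N-k}$, $G$ is an $(N,k)$ Adinkra; it has $n=2^{N-k-1}$ bosons $b_1,\dots,b_n$ and $n$ fermions $f_1,\dots,f_n$. For each color $i$, $L_i$ is the $n\times n$ matrix with $(L_i)_{r,s}=+1$ if $b_r,f_s$ are joined by a solid edge of color $i$, $-1$ if joined by a dashed edge of color $i$, and $0$ otherwise. $\gamma_i$ is the $2n\times 2n$ matrix $\begin{pmatrix}0&L_i\\ L_i^{T}&0\end{pmatrix}$ with rows and columns indexed by $V$ (bosons first, then fermions). *)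

From mathcomp Require Import all_boot all_order all_algebra.
Set Implicit Arguments. Unset Strict Implicit. Unset Printing Implicit Defensive.
Import Order.TTheory GRing.Theory Num.Theory.
Local Open Scope ring_scope.

(* Each edge {x,y} carries a colour col x y : 'I_N (colours
   1..N are represented by 0..N-1) and a parity dashed x y (true = dashed);
   these are required to be symmetric on edges.  boson is the bipartition
   (bosons = boson, fermions = ~~ boson).  The height function is irrelevant
   and omitted. *)
Definition is_adinkra (N : nat) (V : finType) (adj : rel V) (boson : pred V)
    (col : V -> V -> 'I_N) (dashed : V -> V -> bool) : Prop :=
  [/\ (forall x y, adj x y = adj y x) /\ (forall x, ~~ adj x x),
      (forall x y, connect adj x y) /\
      (forall x y, adj x y -> boson x != boson y),
      (forall x y, adj x y -> col x y = col y x /\ dashed x y = dashed y x),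
      (forall x (i : 'I_N), #|[set y | adj x y & col x y == i]| = 1%N) &
      (forall x y z, adj x y -> adj y z -> col x y != col y z ->
        (exists! w, [/\ adj z w, col z w = col x y, adj w x & col w x = col y z])
        /\ (forall w, [/\ adj z w, col z w = col x y, adj w x & col w x = col y z] ->
              odd (dashed x y + dashed y z + dashed z w + dashed w x)%N))].

Definition is_Nk_adinkra (N k : nat) (V : finType) (adj : rel V) (boson : pred V)
    (col : V -> V -> 'I_N) (dashed : V -> V -> bool) : Prop :=
  is_adinkra adj boson col dashed /\ #|V| = (2 ^ (N - k))%N.

Definition enumerates (V : finType) (boson : pred V) (n : nat)
    (bos fer : 'I_n -> V) : Prop :=
  [/\ injective bos /\ injective fer,
      (forall r, boson (bos r)), (forall s, ~~ boson (fer s)),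
      (forall v, boson v -> exists r, bos r = v) &
      (forall v, ~~ boson v -> exists s, fer s = v)].

Definition Lmat (N : nat) (V : finType) (adj : rel V) (col : V -> V -> 'I_N)
    (dashed : V -> V -> bool) (n : nat) (bos fer : 'I_n -> V) (i : 'I_N)
    : 'M[int]_n :=
  \matrix_(r, s)
    (if adj (bos r) (fer s) && (col (bos r) (fer s) == i)
     then (if dashed (bos r) (fer s) then -1 else 1) else 0).

(* gamma_i = [[0, L_i], [L_i^T, 0]], rows/columns indexed by V via
   b_1..b_n, f_1..f_n (bosons first). *)
Definition gammat (N : nat) (V : finType) (adj : rel V) (col : V -> V -> 'I_N)
    (dashed : V -> V -> bool) (n : nat) (bos fer : 'I_n -> V) (i : 'I_N)
    : 'M[int]_(n + n) :=
  block_mx 0 (Lmat adj col dashed bos fer i)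
           (Lmat adj col dashed bos fer i)^T 0.

Definition gamma_prod (N : nat) (V : finType) (adj : rel V) (col : V -> V -> 'I_N)
    (dashed : V -> V -> bool) (n : nat) (bos fer : 'I_n -> V) (s : seq 'I_N)
    : 'M[int]_(n + n) :=
  \big[mulmx/1%:M]_(i <- s) gammat adj col dashed bos fer i.

From mathcomp Require Import all_boot all_order all_algebra.
Import GRing.Theory.
Set Implicit Arguments. Unset Strict Implicit. Unset Printing Implicit Defensive.
Local Open Scope ring_scope.

(* For each colour i, following the unique i-coloured edge is an involution
   [nbr i] of V, and the 4-cycle condition makes these involutions commute.
   The support of gamma_i is the graph of [nbr i], so the support of a
   product of gammas is the graph of the composite walk [nbr_walk s].  A
   walk commutes with every [nbr i], so its fixed points form a set closed
   under adjacency; by connectivity it is either empty or all of V. *)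

Section ColourPartners.

Variables (N : nat) (V : finType) (adj : rel V) (col : V -> V -> 'I_N).

Hypothesis adj_sym : symmetric adj.
Hypothesis adj_connected : forall x y, connect adj x y.
Hypothesis col_sym : forall x y, adj x y -> col x y = col y x.
Hypothesis one_edge_per_colour :
  forall x (i : 'I_N), #|[set y | adj x y & col x y == i]| = 1%N.
Hypothesis four_cycle : forall x y z, adj x y -> adj y z -> col x y != col y z ->
  exists w, [/\ adj z w, col z w = col x y, adj w x & col w x = col y z].

Definition nbr (i : 'I_N) (v : V) : V :=
  odflt v [pick y | adj v y && (col v y == i)].

Lemma nbrP i v y : (y == nbr i v) = adj v y && (col v y == i).
Proof.
have /cards1P [a Ha] : #|[set y | adj v y & col v y == i]| == 1%N.
  by rewrite one_edge_per_colour.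
have memHa z : (adj v z && (col v z == i)) = (z == a).
  by have := congr1 (fun B : {set V} => z \in B) Ha; rewrite !inE.
suff -> : nbr i v = a by rewrite memHa.
rewrite /nbr; case: pickP => [b|/(_ a)]; last by rewrite memHa eqxx.
by rewrite memHa => /eqP.
Qed.

Lemma nbr_adj i v : adj v (nbr i v).
Proof. by have := eqxx (nbr i v); rewrite {1}nbrP => /andP[]. Qed.

Lemma nbr_col i v : col v (nbr i v) = i.
Proof. by have := eqxx (nbr i v); rewrite {1}nbrP => /andP[_ /eqP]. Qed.

Lemma nbr_eq x y : adj x y -> y = nbr (col x y) x.
Proof. by move=> a; apply/eqP; rewrite nbrP a eqxx. Qed.

Lemma nbr_comm i j v : nbr i (nbr j v) = nbr j (nbr i v).
Proof.
have [->|neq_ij] := eqVneq i j; first by [].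
have neq_col : col v (nbr i v) != col (nbr i v) (nbr j (nbr i v)).
  by rewrite !nbr_col.
have [w [zw czw wv cwv]] :=
  four_cycle (nbr_adj i v) (nbr_adj j (nbr i v)) neq_col.
have vw : adj v w by rewrite adj_sym.
have wz : adj w (nbr j (nbr i v)) by rewrite adj_sym.
have -> : nbr j v = w by rewrite [RHS](nbr_eq vw) (col_sym vw) cwv nbr_col.
by rewrite [RHS](nbr_eq wz) (col_sym wz) czw nbr_col.
Qed.

Definition nbr_walk (s : seq 'I_N) (v : V) : V := foldl (fun u i => nbr i u) v s.

Lemma nbr_walk_nbr s i v : nbr_walk s (nbr i v) = nbr i (nbr_walk s v).
Proof. by elim: s v => [|j s IHs] v //; rewrite /nbr_walk /= nbr_comm; apply: IHs. Qed.

Lemma nbr_walk_fixed s u w : nbr_walk s u = u -> nbr_walk s w = w.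
Proof.
have fixed_closed : closed adj [pred v | nbr_walk s v == v].
  apply: intro_closed; first exact: sym_connect_sym.
  by move=> x y /nbr_eq -> /eqP fix_x; rewrite inE /= nbr_walk_nbr fix_x.
move=> fix_u; have := closed_connect fixed_closed (adj_connected u w).
by rewrite !inE /= fix_u eqxx => /esym/eqP.
Qed.

End ColourPartners.

Section MatrixGraphs.

Variables (R : idomainType) (V : finType) (m : nat) (e : 'I_m -> V).
Hypothesis e_inj : injective e.
Hypothesis e_surj : forall v, exists z, e z = v.

Definition mx_graph (A : 'M[R]_m) (g : V -> V) : Prop :=
  forall x y, (A x y != 0) = (e y == g (e x)).

Lemma mx_graph1 : mx_graph 1%:M id.
Proof.
move=> x y; rewrite mxE (inj_eq e_inj) [y == _]eq_sym.
by case: (x == y); rewrite ?oner_neq0 ?eqxx.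
Qed.

Lemma mx_graphM A B f g :
  mx_graph A f -> mx_graph B g -> mx_graph (A *m B) (g \o f).
Proof.
move=> graphA graphB x y; have [z fxE] := e_surj (f (e x)).
rewrite mxE (bigD1 z) //= big1 ?addr0.
  by rewrite mulf_eq0 negb_or graphA graphB fxE eqxx.
move=> z' neq_z'z; apply/eqP; rewrite mulf_eq0; apply/orP; left.
by rewrite -[_ == 0]negbK graphA -fxE (inj_eq e_inj) neq_z'z.
Qed.

Lemma mx_graph_prod (I : Type) (A : I -> 'M[R]_m) (f : I -> V -> V) (s : seq I) :
  (forall i, mx_graph (A i) (f i)) ->
  mx_graph (\big[mulmx/1%:M]_(i <- s) A i) (fun v => foldl (fun u i => f i u) v s).
Proof.
move=> graphA; elim: s => [|i s IHs]; first by rewrite big_nil; exact: mx_graph1.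
by rewrite big_cons; exact: mx_graphM (graphA i) IHs.
Qed.

End MatrixGraphs.

Section VertexIndexing.

Variables (V : finType) (boson : pred V) (n : nat) (bos fer : 'I_n -> V).

Definition vertex_of (x : 'I_(n + n)) : V :=
  match split x with inl r => bos r | inr s => fer s end.

Lemma vertex_of_lshift r : vertex_of (lshift n r) = bos r.
Proof. by rewrite /vertex_of -/(unsplit (inl r)) unsplitK. Qed.

Lemma vertex_of_rshift s : vertex_of (rshift n s) = fer s.
Proof. by rewrite /vertex_of -/(unsplit (inr s)) unsplitK. Qed.

Hypothesis enum : enumerates boson bos fer.

Lemma vertex_of_inj : injective vertex_of.
Proof.
have [[bos_inj fer_inj] bos_boson fer_fermion _ _] := enum.
move=> x y; rewrite -(splitK x) -(splitK y).
case: (split x) => r; case: (split y) => s /=;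
  rewrite ?vertex_of_lshift ?vertex_of_rshift => eq_rs.
- by rewrite (bos_inj _ _ eq_rs).
- by have := bos_boson r; rewrite eq_rs (negbTE (fer_fermion s)).
- by have := bos_boson s; rewrite -eq_rs (negbTE (fer_fermion r)).
- by rewrite (fer_inj _ _ eq_rs).
Qed.

Lemma vertex_of_surj v : exists x, vertex_of x = v.
Proof.
have [_ _ _ bos_onto fer_onto] := enum.
case: (boolP (boson v)) => [/bos_onto | /fer_onto] [r <-].
- by exists (lshift n r); rewrite vertex_of_lshift.
- by exists (rshift n r); rewrite vertex_of_rshift.
Qed.

End VertexIndexing.

Lemma Lmat_neq0 (N : nat) (V : finType) (adj : rel V) (col : V -> V -> 'I_N)
    (dashed : V -> V -> bool) (n : nat) (bos fer : 'I_n -> V) i r s :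
  (Lmat adj col dashed bos fer i r s != 0) =
  adj (bos r) (fer s) && (col (bos r) (fer s) == i).
Proof. by rewrite mxE; case: ifP => _ //; case: ifP. Qed.

Lemma mx_graph_gammat (N : nat) (V : finType) (adj : rel V) (boson : pred V)
    (col : V -> V -> 'I_N) (dashed : V -> V -> bool)
    (n : nat) (bos fer : 'I_n -> V) :
  symmetric adj -> (forall x y, adj x y -> boson x != boson y) ->
  (forall x y, adj x y -> col x y = col y x) ->
  (forall x (i : 'I_N), #|[set y | adj x y & col x y == i]| = 1%N) ->
  enumerates boson bos fer ->
  forall i, mx_graph (vertex_of bos fer) (gammat adj col dashed bos fer i)
                     (nbr adj col i).
Proof.
move=> adj_sym bipartite col_sym one_edge [_ bos_boson fer_fermion _ _] i x y.
have no_adj u v : boson u = boson v -> adj u v = false.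
  by move=> same; apply/negbTE/negP => /bipartite; rewrite same eqxx.
rewrite -(splitK x) -(splitK y) /gammat.
case: (split x) => r; case: (split y) => s /=;
  rewrite ?vertex_of_lshift ?vertex_of_rshift (nbrP one_edge).
- by rewrite block_mxEul mxE eqxx no_adj // !bos_boson.
- by rewrite block_mxEur Lmat_neq0.
- rewrite block_mxEdl mxE Lmat_neq0 adj_sym.
  by case: (boolP (adj _ _)) => //= /col_sym ->.
- by rewrite block_mxEdr mxE eqxx no_adj // !(negbTE (fer_fermion _)).
Qed.

Theorem mainTheorem12 (N k : nat) (V : finType) (adj : rel V) (boson : pred V)
    (col : V -> V -> 'I_N) (dashed : V -> V -> bool)
    (n : nat) (bos fer : 'I_n -> V) (s : seq 'I_N) :
  is_Nk_adinkra k adj boson col dashed ->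
  enumerates boson bos fer ->
  (exists x : 'I_(n + n), gamma_prod adj col dashed bos fer s x x != 0) <->
  (forall x : 'I_(n + n), gamma_prod adj col dashed bos fer s x x != 0).
Proof.
move=> [[[adj_sym _] [connected bipartite] col_dashed_sym one_edge cycles] card_V] enum.
have col_sym x y : adj x y -> col x y = col y x by case/col_dashed_sym.
have four_cycle x y z : adj x y -> adj y z -> col x y != col y z ->
    exists w, [/\ adj z w, col z w = col x y, adj w x & col w x = col y z].
  by move=> xy yz /(cycles x y z xy yz) [[w [w_cycle _]] _]; exists w.
have graph_prod := mx_graph_prod (vertex_of_inj enum) (vertex_of_surj enum) s
  (mx_graph_gammat dashed adj_sym bipartite col_sym one_edge enum).
have diagE x : (gamma_prod adj col dashed bos fer s x x != 0) =
    (nbr_walk adj col s (vertex_of bos fer x) == vertex_of bos fer x).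
  by rewrite graph_prod eq_sym.
split=> [[x0 fixed_x0] x | all_neq0].
  rewrite diagE; apply/eqP; move: fixed_x0; rewrite diagE => /eqP.
  exact: nbr_walk_fixed adj_sym connected col_sym one_edge four_cycle _ _ _.
have /card_gt0P [v _] : (0 < #|V|)%N by rewrite card_V expn_gt0.
by have [x _] := vertex_of_surj enum v; exists x; apply: all_neq0.
Qed.
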